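(* The assignment $\Gamma:\mathbf{FinArb}^<_\star\to\mathbf{TArb}$ (defined below) is a well-defined functor; in particular, for every morphism $h:T\to T'$ of $\mathbf{FinArb}^<_\star$, $\Gamma(h)$ is a homomorphism of pointed edge-ordered graphs $\Gamma(T)\to\Gamma(T')$ that preserves longest paths.
   Context: A (directed) graph is $(V,\to)$ with $\to\subseteq V\times V$; $N(u)$ is the set of outgoing edges of $u$. A pointed graph has a distinguished vertex $v_0$; connected means every vertex is reachable by a path from $v_0$. A path is a finite sequence $v_1\to\cdots\to v_n$ of vertices joined by edges, with length $|\pi|$; co-initial paths share their source; $\pi\sqsubset\sigma$ means $\pi$ is a proper prefix of $\sigma$. A finite edge-ordered graph is a finite graph with a strict linear order $\triangleleft$ on each neighborhood. Lexicographic path order: if $\pi\sqsubset\sigma$ then $\pi\prec\sigma$ (symmetrically); otherwise, with $\zeta$ the longest common prefix, $u$ its target and $v_1,v_2$ the next vertices, $\pi\prec\sigma$ iff $u\to v_1\triangleleft u\to v_2$. Shortlex: $\pi\prec^s\sigma$ iff $|\pi|<|\sigma|$ or ($|\pi|=|\sigma|$ and $\pi\prec\sigma$). A homomorphism of finite pointed edge-ordered graphs $h:G\to H$ is a vertex map with (i) $u\to v$ implies $h(u)\to h(v)$; (ii) the distinguished vertex of $G$ is the unique vertex mapped to the distinguished vertex of $H$; (iii) $u\to v_1\triangleleft u\to v_2$ implies $h(u)\to h(v_1)\triangleleft h(u)\to h(v_2)$. An arborescence is a pointed graph with a unique path $v_0\rightsquigarrow u$ for every $u$. $\mathbf{FinArb}^<_\star$: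 finite edge-ordered arborescences with homomorphisms of pointed edge-ordered graphs. $\mathbf{TArb}$: objects are finite, pointed, connected, edge-ordered graphs $G$ for which there is a finite, connected, pointed, edge-ordered arborescence $T$ on the same vertices with the same distinguished point such that the edge relation of $G$ is the transitive closure of that of $T$ and $u\to v_1\triangleleft u\to v_2$ in $G$ iff $(v_0\rightsquigarrow v_1)\prec^s(v_0\rightsquigarrow v_2)$ for the unique paths in $T$; in such $G$ longest paths $u\rightsquigarrow v$ are unique. Morphisms of $\mathbf{TArb}$ are homomorphisms satisfying (i)–(iii) that map the longest path $u\rightsquigarrow v$ to the longest path $h(u)\rightsquigarrow h(v)$. $\Gamma(T)$ has the vertices and distinguished point of $T$, edge relation the transitive closure of that of $T$, and $u\to v_1\triangleleft u\to v_2$ iff $(v_0\rightsquigarrow v_1)\prec^s(v_0\rightsquigarrow v_2)$ in $T$; $\Gamma(h)(v)=h(v)$. *)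

From mathcomp Require Import all_boot.
Set Implicit Arguments. Unset Strict Implicit. Unset Printing Implicit Defensive.

(* A graph on a finite vertex type V is an edge relation e : rel V.
   An edge order is a Prop-valued ternary relation
   o u v1 v2  :<->  (u -> v1) <| (u -> v2). *)
Definition eorder (V : Type) := V -> V -> V -> Prop.

(* A path a ~> b: a finite nonempty sequence a = x_1 -> ... -> x_n = b,
   represented as the full list of its vertices. Its length is size p - 1. *)
Definition epath (V : eqType) (e : rel V) (a b : V) (p : seq V) : Prop :=
  exists rest, p = a :: rest /\ path e a rest /\ last a rest = b.

Definition connected_from (V : eqType) (e : rel V) (v0 : V) : Prop :=
  forall u, exists p, epath e v0 u p.

Definition is_arb (V : eqType) (e : rel V) (v0 : V) : Prop :=
  forall u, exists p, epath e v0 u p /\ forall q, epath e v0 u q -> q = p.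

Definition edge_order (V : Type) (e : rel V) (o : eorder V) : Prop :=
  forall u,
    (forall v1 v2, o u v1 v2 -> e u v1 /\ e u v2) /\
    (forall v, ~ o u v v) /\
    (forall v1 v2 v3, o u v1 v2 -> o u v2 v3 -> o u v1 v3) /\
    (forall v1 v2, e u v1 -> e u v2 -> v1 <> v2 -> o u v1 v2 \/ o u v2 v1).

(* Lexicographic order on paths. [lex_aux o x p s]: comparing the remaining
   vertices p, s after a common prefix ending at x. *)
Fixpoint lex_aux (V : eqType) (o : eorder V) (x : V) (p s : seq V) : Prop :=
  match p, s with
  | [::], [::] => False
  | [::], _ :: _ => True
  | _ :: _, [::] => False
  | a :: p', b :: s' =>
      if a == b then lex_aux o a p' s' else o x a b
  end.

Definition lex (V : eqType) (o : eorder V) (p s : seq V) : Prop :=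
  match p, s with
  | x :: p', y :: s' => x = y /\ lex_aux o x p' s'
  | _, _ => False
  end.

Definition shortlex (V : eqType) (o : eorder V) (p s : seq V) : Prop :=
  size p < size s \/ (size p = size s /\ lex o p s).

(* transitive (non-reflexive) closure *)
Definition tclos (V : finType) (e : rel V) : rel V :=
  fun u v => [exists w, e u w && connect e w v].

Definition hom (V V' : Type) (e : rel V) (o : eorder V) (v0 : V)
    (e' : rel V') (o' : eorder V') (v0' : V') (h : V -> V') : Prop :=
  (forall u v, e u v -> e' (h u) (h v)) /\
  (forall x, h x = v0' <-> x = v0) /\
  (forall u v1 v2, o u v1 v2 -> o' (h u) (h v1) (h v2)).

Definition longest_path (V : eqType) (e : rel V) (u v : V) (p : seq V) : Prop :=
  epath e u v p /\ forall q, epath e u v q -> size q <= size p.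

Definition preserves_longest (V V' : eqType) (e : rel V) (e' : rel V')
    (h : V -> V') : Prop :=
  forall u v p, longest_path e u v p -> longest_path e' (h u) (h v) (map h p).

Definition Gamma_ord (V : finType) (e : rel V) (o : eorder V) (v0 : V)
    : eorder V :=
  fun u v1 v2 => tclos e u v1 /\ tclos e u v2 /\
    exists p1 p2, epath e v0 v1 p1 /\ epath e v0 v2 p2 /\ shortlex o p1 p2.

Definition is_TArb (V : finType) (g : rel V) (og : eorder V) (v0 : V) : Prop :=
  connected_from g v0 /\ edge_order g og /\
  exists (t : rel V) (ot : eorder V),
    is_arb t v0 /\ connected_from t v0 /\ edge_order t ot /\
    g =2 tclos t /\
    (forall u v1 v2, og u v1 v2 <->
       (g u v1 /\ g u v2 /\
        exists p1 p2, epath t v0 v1 p1 /\ epath t v0 v2 p2 /\ shortlex ot p1 p2)).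

Definition TArb_hom (V V' : finType) (g : rel V) (og : eorder V) (v0 : V)
    (g' : rel V') (og' : eorder V') (v0' : V') (h : V -> V') : Prop :=
  hom g og v0 g' og' v0' h /\ preserves_longest g g' h.

From mathcomp Require Import all_boot.

Set Implicit Arguments.
Unset Strict Implicit.
Unset Printing Implicit Defensive.

(* The arborescence T itself witnesses that Γ(T) is an object of TArb, and the
   shortlex order on root paths is a strict linear order because root paths in
   T are unique and co-initial.  A homomorphism maps root paths to root paths
   and the shortlex order to the shortlex order.  For longest paths: every path
   of the transitive closure refines to a T-path at least as long, and T-paths
   between two vertices are unique; so a longest path from u to v has exactly
   the length of the T-path u ~> v, and h maps that T-path to the T'-path
   h u ~> h v. *)

Section TransitiveClosure.

Variables (V : finType) (e : rel V).

Lemma tclosP u v :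
  tclos e u v <-> exists w r, [/\ e u w, path e w r & last w r = v].
Proof.
split.
- by case/existsP => w /andP [euw /connectP [r pr ->]]; exists w, r.
- case=> w [r [euw pr lr]]; apply/existsP; exists w; rewrite euw /=.
  by apply/connectP; exists r.
Qed.

Lemma sub_tclos : subrel e (tclos e).
Proof. by move=> u v euv; apply/tclosP; exists v, [::]. Qed.

Lemma tclos_path_refine a r :
  path (tclos e) a r ->
  exists2 r', path e a r' & last a r' = last a r /\ size r <= size r'.
Proof.
elim: r a => [|b r IHr] a /=; first by exists [::].
case/andP => /tclosP [w [s [eaw ps ls]]] /IHr [r' pr' [lr' szr']].
exists (w :: s ++ r'); first by rewrite /= eaw cat_path ps ls.
by rewrite /= last_cat ls lr' size_cat ltnS (leq_trans szr') ?leq_addl.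
Qed.

End TransitiveClosure.

Lemma tclos_homo (V V' : finType) (e : rel V) (e' : rel V') (h : V -> V') :
  {homo h : u v / e u v >-> e' u v} ->
  {homo h : u v / tclos e u v >-> tclos e' u v}.
Proof.
move=> hE u v /tclosP [w [r [euw pr lr]]]; apply/tclosP.
by exists (h w), (map h r); rewrite hE // (homo_path hE pr) last_map lr.
Qed.

Section EndpointPaths.

Variables (V V' : eqType) (e : rel V) (e' : rel V').

Lemma epath_homo (h : V -> V') a b p :
  {homo h : u v / e u v >-> e' u v} ->
  epath e a b p -> epath e' (h a) (h b) (map h p).
Proof.
move=> hE [r [-> [pr <-]]]; exists (map h r).
by rewrite last_map (homo_path hE pr).
Qed.

Lemma sub_epath (f : rel V) a b p : subrel e f -> epath e a b p -> epath f a b p.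
Proof. by move=> sub_ef [r [-> [pr lr]]]; exists r; rewrite (sub_path sub_ef pr). Qed.

End EndpointPaths.

Section Arborescence.

Variables (V : eqType) (e : rel V) (v0 : V).
Hypothesis arb : is_arb e v0.

Lemma arb_connected : connected_from e v0.
Proof. by move=> u; have [p [pu _]] := arb u; exists p. Qed.

Lemma arb_epath_uniq v p q : epath e v0 v p -> epath e v0 v q -> p = q.
Proof. by move=> ep eq; have [s [_ U]] := arb v; rewrite (U _ ep) (U _ eq). Qed.

(* Two paths from a with the same endpoint both extend the root path to a. *)
Lemma arb_path_uniq a r1 r2 :
  path e a r1 -> path e a r2 -> last a r1 = last a r2 -> r1 = r2.
Proof.
move=> pr1 pr2 lr12; have [_ [[s [-> [ps ls]]] _]] := arb a.
have ext r : path e a r -> epath e v0 (last a r) (v0 :: s ++ r).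
  by move=> pr; exists (s ++ r); rewrite cat_path last_cat ls ps pr.
have := arb_epath_uniq (ext _ pr1); rewrite lr12 => /(_ _ (ext _ pr2)) [].
by move/(congr1 (drop (size s))); rewrite !drop_size_cat.
Qed.

End Arborescence.

Lemma arb_tclos_path_size (V : finType) (e : rel V) (v0 : V) a q r :
  is_arb e v0 -> path (tclos e) a q -> path e a r -> last a q = last a r ->
  size q <= size r.
Proof.
move=> arb /tclos_path_refine [q' pq' [lq' szq']] pr lqr.
by rewrite -(arb_path_uniq arb pq' pr) ?lq'.
Qed.

Section EdgeOrder.

Variables (V : Type) (e : rel V) (o : eorder V).
Hypothesis eo : edge_order e o.

Lemma edge_order_irr : forall x a, ~ o x a a.
Proof. by move=> x; have [_ [irr _]] := eo x. Qed.

Lemma edge_order_trans : forall x a b c, o x a b -> o x b c -> o x a c.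
Proof. by move=> x; have [_ [_ [tr _]]] := eo x. Qed.

Lemma edge_order_total :
  forall x a b, e x a -> e x b -> a <> b -> o x a b \/ o x b a.
Proof. by move=> x; have [_ [_ [_ tot]]] := eo x. Qed.

End EdgeOrder.

Section Shortlex.

Variables (V : eqType) (o : eorder V).

Lemma lex_aux_irr x r : ~ lex_aux o x r r.
Proof. by elim: r x => [|a r IHr] x //=; rewrite eqxx. Qed.

Lemma shortlex_irr p : ~ shortlex o p p.
Proof.
case=> [|[_]]; first by rewrite ltnn.
by case: p => [|x r] //= [_]; apply: lex_aux_irr.
Qed.

Hypothesis o_irr : forall x a, ~ o x a a.
Hypothesis o_trans : forall x a b c, o x a b -> o x b c -> o x a c.

Lemma lex_aux_trans x p q s :
  lex_aux o x p q -> lex_aux o x q s -> lex_aux o x p s.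
Proof.
elim: p x q s => [|a p IHp] x [|b q] [|c s] //=.
case: (eqVneq a b) => [<-{b}|nab].
  by case: (eqVneq a c) => // _; apply: IHp.
case: (eqVneq b c) => [<-|_]; first by rewrite (negbTE nab).
case: (eqVneq a c) => [<-|_]; last exact: o_trans.
by move=> oxab /(o_trans oxab)/o_irr.
Qed.

Lemma lex_trans p q s : lex o p q -> lex o q s -> lex o p s.
Proof.
case: p q s => [|x p] [|y q] [|z s] //= [exy lexpq] [eyz lexqs]; subst.
by split=> //; apply: lex_aux_trans lexqs.
Qed.

Lemma shortlex_trans p q s : shortlex o p q -> shortlex o q s -> shortlex o p s.
Proof.
case=> [ltpq|[eqpq lexpq]] [ltqs|[eqqs lexqs]].
- by left; apply: ltn_trans ltqs.
- by left; rewrite -eqqs.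
- by left; rewrite eqpq.
- by right; split; [rewrite eqpq | apply: lex_trans lexqs].
Qed.

End Shortlex.

Lemma lex_aux_total (V : eqType) (e : rel V) (o : eorder V) x p q :
  (forall u a b, e u a -> e u b -> a <> b -> o u a b \/ o u b a) ->
  path e x p -> path e x q -> size p = size q -> p <> q ->
  lex_aux o x p q \/ lex_aux o x q p.
Proof.
move=> tot; elim: p x q => [|a p IHp] x [|b q] //=.
move=> /andP [exa pp] /andP [exb pq] [szpq] neq.
case: (eqVneq a b) => [eqab|neab].
  by subst b; apply: IHp => // epq; apply: neq; rewrite epq.
by apply: tot => // eqab; rewrite eqab eqxx in neab.
Qed.

Lemma shortlex_total (V : eqType) (e : rel V) (o : eorder V) x a b p q :
  (forall u a b, e u a -> e u b -> a <> b -> o u a b \/ o u b a) ->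
  epath e x a p -> epath e x b q -> a <> b -> shortlex o p q \/ shortlex o q p.
Proof.
move=> tot [r [-> [pr <-]]] [s [-> [ps <-]]] nab.
have nrs : r <> s by move=> ers; apply: nab; rewrite ers.
case: (ltngtP (size r) (size s)) => [ltrs|ltsr|eqrs].
- by left; left.
- by right; left.
have [lexrs|lexsr] := lex_aux_total tot pr ps eqrs nrs.
- by left; right; rewrite /= eqrs.
- by right; right; rewrite /= eqrs.
Qed.

Section ShortlexMap.

Variables (V V' : eqType) (o : eorder V) (o' : eorder V') (h : V -> V').
Hypothesis hO : forall u a b, o u a b -> o' (h u) (h a) (h b).
Hypothesis o'_irr : forall x a, ~ o' x a a.

Lemma lex_aux_map x p q :
  lex_aux o x p q -> lex_aux o' (h x) (map h p) (map h q).
Proof.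
elim: p x q => [|a p IHp] x [|b q] //=.
case: (eqVneq a b) => [<-|neab]; first by rewrite eqxx; apply: IHp.
move=> oxab; case: eqP => [eqh|_]; last exact: hO.
by have := hO oxab; rewrite eqh => /o'_irr.
Qed.

Lemma lex_map p q : lex o p q -> lex o' (map h p) (map h q).
Proof. by case: p q => [|x p] [|y q] //= [<- /lex_aux_map]. Qed.

Lemma shortlex_map p q : shortlex o p q -> shortlex o' (map h p) (map h q).
Proof.
rewrite /shortlex !size_map.
by case=> [|[eqpq /lex_map]]; [left | right].
Qed.

End ShortlexMap.

Section Gamma.

Variables (V : finType) (e : rel V) (o : eorder V) (v0 : V).
Hypotheses (arb : is_arb e v0) (eo : edge_order e o).

Lemma Gamma_edge_order : edge_order (tclos e) (Gamma_ord e o v0).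
Proof.
move=> u; split; [|split; [|split]].
- by move=> v1 v2 [uv1 [uv2 _]].
- move=> v [_ [_ [p [q [ep [eq]]]]]].
  by rewrite (arb_epath_uniq arb ep eq); apply: shortlex_irr.
- move=> v1 v2 v3 [uv1 [_ [p1 [p2 [ep1 [ep2 lt12]]]]]].
  move=> [_ [uv3 [p2' [p3 [ep2' [ep3 lt23]]]]]].
  rewrite -(arb_epath_uniq arb ep2 ep2') in lt23.
  split=> //; split=> //; exists p1, p3; split=> //; split=> //.
  apply: (shortlex_trans _ _ lt12 lt23).
    exact: edge_order_irr eo.
  exact: edge_order_trans eo.
- move=> v1 v2 uv1 uv2 nv12.
  have [[p1 [ep1 _]] [p2 [ep2 _]]] := (arb v1, arb v2).
  have [lt12|lt21] := shortlex_total (edge_order_total eo) ep1 ep2 nv12.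
  + by left; split=> //; split=> //; exists p1, p2.
  + by right; split=> //; split=> //; exists p2, p1.
Qed.

Lemma Gamma_TArb : is_TArb (tclos e) (Gamma_ord e o v0) v0.
Proof.
split.
  move=> u; have [p ep] := arb_connected arb u.
  by exists p; apply: sub_epath ep; apply: sub_tclos.
split; first exact: Gamma_edge_order.
exists e, o; split=> //; split; first exact: arb_connected.
by split=> //; split=> //.
Qed.

End Gamma.

Lemma Gamma_hom (V V' : finType) (e : rel V) (o : eorder V) (v0 : V)
    (e' : rel V') (o' : eorder V') (v0' : V') (h : V -> V') :
  edge_order e' o' -> hom e o v0 e' o' v0' h ->
  hom (tclos e) (Gamma_ord e o v0) v0 (tclos e') (Gamma_ord e' o' v0') v0' h.
Proof.
move=> eo' [hE [h0 hO]]; have hv0 : h v0 = v0' by apply/h0.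
split; first exact: tclos_homo.
split=> // u v1 v2 [uv1 [uv2 [p1 [p2 [ep1 [ep2 lt12]]]]]].
split; first exact: tclos_homo hE _ _ uv1.
split; first exact: tclos_homo hE _ _ uv2.
exists (map h p1), (map h p2); rewrite -hv0.
split; first exact: epath_homo hE ep1.
split; first exact: epath_homo hE ep2.
apply: (shortlex_map hO _ lt12); exact: edge_order_irr eo'.
Qed.

Lemma tclos_preserves_longest (V V' : finType) (e : rel V) (e' : rel V')
    (v0' : V') (h : V -> V') :
  is_arb e' v0' -> {homo h : u v / e u v >-> e' u v} ->
  preserves_longest (tclos e) (tclos e') h.
Proof.
move=> arb' hE u v p [ep longest]; case: (ep) => r [Ep [pr lr]]; subst p.
have [r' pr' [lr' szr']] := tclos_path_refine pr.
have szr'r : size r' <= size r.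
  have ep' : epath (tclos e) u v (u :: r').
    by exists r'; rewrite (sub_path (@sub_tclos _ e) pr') lr' lr.
  exact: longest ep'.
split; first exact: epath_homo (tclos_homo hE) ep.
move=> q [s [-> [ps ls]]]; rewrite /= size_map ltnS (leq_trans _ szr'r) //.
rewrite -(size_map h r'); apply: arb_tclos_path_size arb' ps (homo_path hE pr') _.
by rewrite ls last_map lr' lr.
Qed.

Theorem lemma10p6 (V V' : finType)
    (e : rel V) (o : eorder V) (v0 : V)
    (e' : rel V') (o' : eorder V') (v0' : V') (h : V -> V') :
  is_arb e v0 -> edge_order e o ->
  is_arb e' v0' -> edge_order e' o' ->
  hom e o v0 e' o' v0' h ->
  is_TArb (tclos e) (Gamma_ord e o v0) v0 /\
  is_TArb (tclos e') (Gamma_ord e' o' v0') v0' /\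
  TArb_hom (tclos e) (Gamma_ord e o v0) v0
           (tclos e') (Gamma_ord e' o' v0') v0' h.
Proof.
move=> arb eo arb' eo' hh.
split; first exact: Gamma_TArb.
split; first exact: Gamma_TArb.
split; first exact: Gamma_hom.
by case: hh => hE _; apply: tclos_preserves_longest arb' hE.
Qed.
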